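(* For every sequent $\Gamma\Rightarrow\Delta$ of compound diagrams: if $\Gamma\Rightarrow\Delta$ is provable in the calculus $\mathbf{C}$, then $\Gamma\Rightarrow\Delta$ is valid.
   Context: Fix a countably infinite set $\mathcal V$ of propositional variables. A Heyting algebra $\mathcal H=(H,\vee,\wedge,\to,0,1)$ is a bounded distributive lattice (order $\le$, join $\vee$, meet $\wedge$, bottom $0$, top $1$) with a binary operation $\to$ such that $c\wedge a\le b\iff c\le a\to b$. Write $-a:=a\to 0$; empty meets are $1$, empty joins are $0$. A valuation is a map $v:\mathcal V\to H$. Zones: for a finite set $L\subset\mathcal V$ (contours), a zone over $L$ is a pair $z=(\mathrm{in}(z),\mathrm{out}(z))$ of disjoint subsets of $L$ with union $L$; $\mathcal Z(L)$ is the set of all zones over $L$. Put $v(z)=\bigwedge_{c\in\mathrm{in}(z)}v(c)\wedge\bigwedge_{c\in\mathrm{out}(z)}-v(c)$ and $m_v(z)=\big(\bigwedge_{c\in\mathrm{in}(z)}v(c)\big)\to\big(\bigvee_{c\in\mathrm{out}(z)}v(c)\big)$. Unitary diagrams are of three syntactically distinct kinds. (i) Venn diagram $d=(L,\mathcal Z(L),S)$, $S=S(d)\subseteq\mathcal Z(L)$ the shaded zones, $[\![d]\!]_v=\bigvee_{z\in S}v(z)$. Special Venn diagrams: $\bot=(\emptyset,\{(\emptyset,\emptyset)\},\emptyset)$, $\top=(\emptyset,\{(\emptyset,\emptyset)\},\{(\emptyset,\emptyset)\})$, the positive literal $P_c=(\{c\},\mathcal Z(\{c\}),\{(\{c\},\emptyset)\})$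 and negative literal $N_c=(\{c\},\mathcal Z(\{c\}),\{(\emptyset,\{c\})\})$ for $c\in\mathcal V$. (ii) Pure Euler diagram $d=(L,Z)$, $Z\subseteq\mathcal Z(L)$ the visible zones, $M(d)=\mathcal Z(L)\setminus Z$ the missing zones, $[\![d]\!]_v=\bigwedge_{z\in M(d)}m_v(z)$. (iii) Euler–Venn diagram $d=(L,Z,S)$ with $Z\subseteq\mathcal Z(L)$, $S\subseteq Z$; $E(d)=(L,Z)$ (pure Euler), $V(d)=(L,\mathcal Z(L),S)$ (Venn), $[\![d]\!]_v=[\![E(d)]\!]_v\to[\![V(d)]\!]_v$. Compound diagrams: $D::=d\mid D\wedge D\mid D\vee D\mid D\to D$ ($d$ unitary), with $[\![D_1\wedge D_2]\!]_v=[\![D_1]\!]_v\wedge[\![D_2]\!]_v$, and similarly $\vee$, $\to$. For $c\in L$, $\mathrm{adj}(z,c)$ is the zone obtained from $z$ by moving $c$ from $\mathrm{out}(z)$ to $\mathrm{in}(z)$ or from $\mathrm{in}(z)$ to $\mathrm{out}(z)$. Reduction: $z\setminus c=(\mathrm{in}(z)\setminus\{c\},\mathrm{out}(z)\setminus\{c\})$, and for a pure Euler $d=(L,Z)$, $d\setminus c=(L\setminus\{c\},\{z\setminus c:z\in Z\})$ (pure Euler). A sequent $\Gamma\Rightarrow\Delta$ consists of finite multisets of compound diagrams; it is valid iff for every Heyting algebra and every valuation $v$, $\bigwedge_{D\in\Gamma}[\![D]\!]_v\le\bigvee_{E\in\Delta}[\![E]\!]_v$. The calculus $\mathbf C$ (premisses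 / conclusion; $\Gamma,\Delta$ arbitrary multisets, $D,E$ compound diagrams): Zero-premiss rules: axiom $P_c,\Gamma\Rightarrow\Delta,P_c$; $(\bot L)$ $\bot,\Gamma\Rightarrow\Delta$; $(\top R)$ $\Gamma\Rightarrow\Delta,\top$. $(\wedge L)$ $D,E,\Gamma\Rightarrow\Delta$ / $D\wedge E,\Gamma\Rightarrow\Delta$. $(\vee L)$ $D,\Gamma\Rightarrow\Delta$ and $E,\Gamma\Rightarrow\Delta$ / $D\vee E,\Gamma\Rightarrow\Delta$. $(\to L)$ $D\to E,\Gamma\Rightarrow D$ and $E,\Gamma\Rightarrow\Delta$ / $D\to E,\Gamma\Rightarrow\Delta$. $(\wedge R)$ $\Gamma\Rightarrow\Delta,D$ and $\Gamma\Rightarrow\Delta,E$ / $\Gamma\Rightarrow\Delta,D\wedge E$. $(\vee R)$ $\Gamma\Rightarrow\Delta,D,E$ / $\Gamma\Rightarrow\Delta,D\vee E$. $(\to R)$ $D,\Gamma\Rightarrow E$ / $\Gamma\Rightarrow\Delta,D\to E$. $(\mathrm{lit}L)$ $N_c,\Gamma\Rightarrow P_c$ / $N_c,\Gamma\Rightarrow\Delta$. $(\mathrm{lit}R)$ $P_c,\Gamma\Rightarrow$ (empty succedent) / $\Gamma\Rightarrow\Delta,N_c$. For a Venn $d=(L,\mathcal Z(L),S)$ with $|S|>1$ and $d_i=(L,\mathcal Z(L),S_i)$, $S_1\cup S_2=S$: $(\mathrm{sep}L)$ $d_1,\Gamma\Rightarrow\Delta$ and $d_2,\Gamma\Rightarrow\Delta$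 / $d,\Gamma\Rightarrow\Delta$; $(\mathrm{sep}R)$ $\Gamma\Rightarrow\Delta,d_1,d_2$ / $\Gamma\Rightarrow\Delta,d$. For a Venn $d$ with $S(d)=\{z\}$, $z=(\{n_1,\dots,n_k\},\{o_1,\dots,o_l\})$: $(\mathrm{dec}L)$ $P_{n_1},\dots,P_{n_k},N_{o_1},\dots,N_{o_l},\Gamma\Rightarrow\Delta$ / $d,\Gamma\Rightarrow\Delta$; $(\mathrm{dec}R)$ $\Gamma\Rightarrow\Delta,P_{n_i}$ ($1\le i\le k$) and $\Gamma\Rightarrow\Delta,N_{o_j}$ ($1\le j\le l$) / $\Gamma\Rightarrow\Delta,d$. For a pure Euler $d=(L,Z)$ such that every $z\in M(d)$ has some $\ell\in L$ with $\mathrm{adj}(z,\ell)\in M(d)$, and $\{c_1,\dots,c_k\}\subseteq L$ the maximal set of contours with $M(d\setminus c_i)\neq\emptyset$: $(\mathrm{red}L)$ $d\setminus c_1,\dots,d\setminus c_k,\Gamma\Rightarrow\Delta$ / $d,\Gamma\Rightarrow\Delta$; $(\mathrm{red}R)$ $\Gamma\Rightarrow\Delta,d\setminus c_i$ ($1\le i\le k$) / $\Gamma\Rightarrow\Delta,d$. For a pure Euler $d=(L,Z)$ with $|M(d)|>1$ and pure Euler $d_1=(L,Z_1)$, $d_2=(L,Z_2)$ with $Z_1\cap Z_2=Z$: $(\mathrm{mzsep}L)$ $d_1,d_2,\Gamma\Rightarrow\Delta$ / $d,\Gamma\Rightarrow\Delta$; $(\mathrm{mzsep}R)$ $\Gamma\Rightarrow\Delta,d_1$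 and $\Gamma\Rightarrow\Delta,d_2$ / $\Gamma\Rightarrow\Delta,d$. For a pure Euler $d$ with $M(d)=\{z\}$, $z=(\{n_1,\dots,n_k\},\{o_1,\dots,o_l\})$: $(\mathrm{impdec}L)$ $d,\Gamma\Rightarrow P_{n_i}$ ($1\le i\le k$) and $P_{o_j},\Gamma\Rightarrow\Delta$ ($1\le j\le l$) / $d,\Gamma\Rightarrow\Delta$; $(\mathrm{impdec}R)$ $P_{n_1},\dots,P_{n_k},\Gamma\Rightarrow P_{o_1},\dots,P_{o_l}$ / $\Gamma\Rightarrow\Delta,d$. For an Euler–Venn $d$: $(\mathrm{det}L)$ $d,\Gamma\Rightarrow E(d)$ and $V(d),\Gamma\Rightarrow\Delta$ / $d,\Gamma\Rightarrow\Delta$; $(\mathrm{det}R)$ $E(d),\Gamma\Rightarrow V(d)$ / $\Gamma\Rightarrow\Delta,d$. A proof of a sequent is a finite tree of rule instances with that sequent at the root and all leaves instances of zero-premiss rules; a sequent is provable if it has a proof. *)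

From HB Require Import structures.
From mathcomp Require Import all_boot all_order.
From mathcomp Require Import finmap.
From Stdlib Require Import List Permutation.

Set Implicit Arguments.
Unset Strict Implicit.
Unset Printing Implicit Defensive.

Import Order.TTheory.
Local Open Scope fset_scope.

(* propositional variables / contours: the countably infinite set nat *)
Definition var := nat.

Definition zone := ({fset var} * {fset var})%type.
Definition zin (z : zone) : {fset var} := z.1.
Definition zout (z : zone) : {fset var} := z.2.

Definition is_zone (L : {fset var}) (z : zone) : bool :=
  fdisjoint (zin z) (zout z) && (zin z `|` zout z == L).

Definition zones (L : {fset var}) : {fset zone} :=
  [fset ((A, L `\` A) : zone) | A in fpowerset L].

Inductive unitary : Type :=
  | Venn of {fset var} & {fset zone}                  (* (L, Z(L), S) *)
  | Euler of {fset var} & {fset zone}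
  | EulerVenn of {fset var} & {fset zone} & {fset zone}.

Inductive diagram : Type :=
  | DU of unitary
  | DAnd of diagram & diagram
  | DOr of diagram & diagram
  | DImp of diagram & diagram.

Definition wf_unitary (d : unitary) : bool :=
  match d with
  | Venn L Sh => Sh `<=` zones L
  | Euler L Z => Z `<=` zones L
  | EulerVenn L Z Sh => (Z `<=` zones L) && (Sh `<=` Z)
  end.

Fixpoint wf_diagram (D : diagram) : bool :=
  match D with
  | DU d => wf_unitary d
  | DAnd D1 D2 | DOr D1 D2 | DImp D1 D2 => wf_diagram D1 && wf_diagram D2
  end.

Definition zone0 : zone := (fset0, fset0).
Definition VBot : diagram := DU (Venn fset0 fset0).
Definition VTop : diagram := DU (Venn fset0 [fset zone0]).
Definition PosL (c : var) : diagram :=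
  DU (Venn [fset c] [fset (([fset c], fset0) : zone)]).
Definition NegL (c : var) : diagram :=
  DU (Venn [fset c] [fset ((fset0, [fset c]) : zone)]).

Definition missing (L : {fset var}) (Z : {fset zone}) : {fset zone} :=
  zones L `\` Z.

Definition adj (z : zone) (c : var) : zone :=
  if c \in zin z then (zin z `\ c, c |` zout z) else (c |` zin z, zout z `\ c).

Definition zred (z : zone) (c : var) : zone := (zin z `\ c, zout z `\ c).
Definition red_L (L : {fset var}) (c : var) : {fset var} := L `\ c.
Definition red_Z (Z : {fset zone}) (c : var) : {fset zone} :=
  [fset zred z c | z in Z].

Definition red_cond (L : {fset var}) (Z : {fset zone}) : Prop :=
  forall z, z \in missing L Z ->
    exists2 l, l \in L & adj z l \in missing L Z.

Definition red_contours (L : {fset var}) (Z : {fset zone}) : {fset var} :=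
  [fset c in L | missing (red_L L c) (red_Z Z c) != fset0].

Definition EulerRed (L : {fset var}) (Z : {fset zone}) (c : var) : diagram :=
  DU (Euler (red_L L c) (red_Z Z c)).

(* The calculus C.  Sequents are pairs of finite multisets, represented
   as lists taken up to permutation (rule [prov_perm]).               *)

Inductive prov : list diagram -> list diagram -> Prop :=
  | prov_perm G D G' D' :
      Permutation G G' -> Permutation D D' -> prov G D -> prov G' D'
  | prov_ax c G D : prov (PosL c :: G) (PosL c :: D)
  | prov_botL G D : prov (VBot :: G) D
  | prov_topR G D : prov G (VTop :: D)
  | prov_andL A B G D : prov (A :: B :: G) D -> prov (DAnd A B :: G) D
  | prov_orL A B G D :
      prov (A :: G) D -> prov (B :: G) D -> prov (DOr A B :: G) D
  | prov_impL A B G D :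
      prov (DImp A B :: G) [:: A] -> prov (B :: G) D -> prov (DImp A B :: G) D
  | prov_andR A B G D :
      prov G (A :: D) -> prov G (B :: D) -> prov G (DAnd A B :: D)
  | prov_orR A B G D : prov G (A :: B :: D) -> prov G (DOr A B :: D)
  | prov_impR A B G D : prov (A :: G) [:: B] -> prov G (DImp A B :: D)
  | prov_litL c G D : prov (NegL c :: G) [:: PosL c] -> prov (NegL c :: G) D
  | prov_litR c G D : prov (PosL c :: G) [::] -> prov G (NegL c :: D)
  | prov_sepL L Sh Sh1 Sh2 G D :
      (1 < #|` Sh|)%N -> Sh1 `|` Sh2 = Sh ->
      prov (DU (Venn L Sh1) :: G) D -> prov (DU (Venn L Sh2) :: G) D ->
      prov (DU (Venn L Sh) :: G) D
  | prov_sepR L Sh Sh1 Sh2 G D :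
      (1 < #|` Sh|)%N -> Sh1 `|` Sh2 = Sh ->
      prov G (DU (Venn L Sh1) :: DU (Venn L Sh2) :: D) ->
      prov G (DU (Venn L Sh) :: D)
  | prov_decL L z G D :
      prov ([seq PosL n | n <- zin z] ++ [seq NegL o | o <- zout z] ++ G) D ->
      prov (DU (Venn L [fset z]) :: G) D
  | prov_decR L z G D :
      (forall n, n \in zin z -> prov G (PosL n :: D)) ->
      (forall o, o \in zout z -> prov G (NegL o :: D)) ->
      prov G (DU (Venn L [fset z]) :: D)
  | prov_redL L Z G D :
      red_cond L Z ->
      prov ([seq EulerRed L Z c | c <- red_contours L Z] ++ G) D ->
      prov (DU (Euler L Z) :: G) D
  | prov_redR L Z G D :
      red_cond L Z ->
      (forall c, c \in red_contours L Z -> prov G (EulerRed L Z c :: D)) ->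
      prov G (DU (Euler L Z) :: D)
  | prov_mzsepL L Z Z1 Z2 G D :
      (1 < #|` missing L Z|)%N ->
      Z1 `<=` zones L -> Z2 `<=` zones L -> Z1 `&` Z2 = Z ->
      prov (DU (Euler L Z1) :: DU (Euler L Z2) :: G) D ->
      prov (DU (Euler L Z) :: G) D
  | prov_mzsepR L Z Z1 Z2 G D :
      (1 < #|` missing L Z|)%N ->
      Z1 `<=` zones L -> Z2 `<=` zones L -> Z1 `&` Z2 = Z ->
      prov G (DU (Euler L Z1) :: D) -> prov G (DU (Euler L Z2) :: D) ->
      prov G (DU (Euler L Z) :: D)
  | prov_impdecL L Z z G D :
      missing L Z = [fset z] ->
      (forall n, n \in zin z -> prov (DU (Euler L Z) :: G) [:: PosL n]) ->
      (forall o, o \in zout z -> prov (PosL o :: G) D) ->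
      prov (DU (Euler L Z) :: G) D
  | prov_impdecR L Z z G D :
      missing L Z = [fset z] ->
      prov ([seq PosL n | n <- zin z] ++ G) [seq PosL o | o <- zout z] ->
      prov G (DU (Euler L Z) :: D)
  | prov_detL L Z Sh G D :
      prov (DU (EulerVenn L Z Sh) :: G) [:: DU (Euler L Z)] ->
      prov (DU (Venn L Sh) :: G) D ->
      prov (DU (EulerVenn L Z Sh) :: G) D
  | prov_detR L Z Sh G D :
      prov (DU (Euler L Z) :: G) [:: DU (Venn L Sh)] ->
      prov G (DU (EulerVenn L Z Sh) :: D).

Local Open Scope order_scope.

Definition heyting_imp {disp : Order.disp_t} {H : tbDistrLatticeType disp}
  (imp : H -> H -> H) : Prop :=
  forall a b c : H, (c `&` a <= b) = (c <= imp a b).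

Section Semantics.
Context {disp : Order.disp_t} {H : tbDistrLatticeType disp}.
Variables (imp : H -> H -> H) (v : var -> H).

Definition hneg (a : H) : H := imp a \bot.

Definition zone_val (z : zone) : H :=
  (\meet_(c <- zin z) v c) `&` (\meet_(c <- zout z) hneg (v c)).

Definition zone_imp (z : zone) : H :=
  imp (\meet_(c <- zin z) v c) (\join_(c <- zout z) v c).

Definition sem_venn (L : {fset var}) (Sh : {fset zone}) : H :=
  \join_(z <- Sh) zone_val z.

Definition sem_euler (L : {fset var}) (Z : {fset zone}) : H :=
  \meet_(z <- missing L Z) zone_imp z.

Definition sem_unitary (d : unitary) : H :=
  match d with
  | Venn L Sh => sem_venn L Sh
  | Euler L Z => sem_euler L Z
  | EulerVenn L Z Sh => imp (sem_euler L Z) (sem_venn L Sh)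
  end.

Fixpoint sem (D : diagram) : H :=
  match D with
  | DU d => sem_unitary d
  | DAnd D1 D2 => sem D1 `&` sem D2
  | DOr D1 D2 => sem D1 `|` sem D2
  | DImp D1 D2 => imp (sem D1) (sem D2)
  end.

End Semantics.

Definition valid (G D : list diagram) : Prop :=
  forall (disp : Order.disp_t) (H : tbDistrLatticeType disp)
         (imp : H -> H -> H), heyting_imp imp ->
  forall v : var -> H,
    \meet_(A <- G) sem imp v A <= \join_(B <- D) sem imp v B.

From HB Require Import structures.
From mathcomp Require Import all_boot all_order.
From mathcomp Require Import finmap.
From Stdlib Require Import List Permutation.
Set Implicit Arguments.
Unset Strict Implicit.
Unset Printing Implicit Defensive.
Import Order.TTheory.
Local Open Scope fset_scope.

(* A Venn diagram denotes the join of its shaded zones and a pure Euler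
   diagram the meet of the implications [m_v z] of its missing zones, so
   sep, dec, mzsep and impdec are lattice identities or instances of the
   adjunction defining [->].  For reduction: a missing zone w of d \ c
   lifts to the two missing zones of d obtained by putting c inside and
   outside w, and (a /\ c -> b) /\ (a -> c \/ b) <= (a -> b) gives redL.
   Conversely, under the side condition of red every missing zone z of d
   has a missing neighbour adj z l, which keeps z \ l missing in d \ l;
   since m_v (z \ l) <= m_v z this gives redR. *)

(* The part of well-formedness soundness depends on: if visible zones of d
   were not zones over its contours, some z \ l could become visible in
   d \ l, which breaks the argument for redR. *)
Definition wf_euler_unitary (d : unitary) : bool :=
  match d with
  | Venn _ _ => true
  | Euler L Z | EulerVenn L Z _ => Z `<=` zones L
  end.

Fixpoint wf_euler (D : diagram) : bool :=
  match D with
  | DU d => wf_euler_unitary d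
  | DAnd A B | DOr A B | DImp A B => wf_euler A && wf_euler B
  end.

Lemma wf_diagram_euler D : wf_diagram D -> wf_euler D.
Proof.
elim: D => [[L Z|L Z|L Z S]|A IA B IB|A IA B IB|A IA B IB] //=;
  by [case/andP | move/andP=> [/IA -> /IB ->]].
Qed.

Lemma Forall_wf_euler G : Forall (fun A => wf_diagram A) G -> all wf_euler G.
Proof. by elim => //= A G' /wf_diagram_euler -> _ ->. Qed.

Lemma big_Permutation R (op : R -> R -> R) idx I (F : I -> R) (s t : list I) :
  left_commutative op -> Permutation s t ->
  \big[op/idx]_(x <- s) F x = \big[op/idx]_(x <- t) F x.
Proof.
move=> opCA; elim => [|x s1 t1 _ IH|x y l|s1 t1 u _ IH1 _ IH2] //.
- by rewrite !big_cons IH.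
- by rewrite !big_cons opCA.
- by rewrite IH1 IH2.
Qed.

Lemma all_Permutation I (p : pred I) (s t : list I) :
  Permutation s t -> all p s = all p t.
Proof. by move=> pst; rewrite -!big_all; apply: big_Permutation pst; exact: andbCA. Qed.

Lemma in_zones L (z : zone) :
  (z \in zones L) = (z.1 `<=` L) && (z.2 == L `\` z.1).
Proof.
apply/imfsetP/andP => [[A /= + ->]|[z1L /eqP z2]] /=; first by rewrite fpowersetE.
by exists z.1; rewrite /= ?fpowersetE // -z2; case: z {z1L z2}.
Qed.

Lemma zones_fst_inj L (y z : zone) :
  y \in zones L -> z \in zones L -> y.1 = z.1 -> y = z.
Proof.
rewrite !in_zones => /andP[_ /eqP y2] /andP[_ /eqP z2] yz1.
by case: y z y2 z2 yz1 => [a b] [c d] /= -> -> ->.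
Qed.

Lemma zred_zones L (z : zone) c : z \in zones L -> zred z c \in zones (red_L L c).
Proof.
rewrite !in_zones /zred /red_L /zin /zout /= => /andP[z1L /eqP z2].
apply/andP; split.
- by apply/fsubsetP => x; rewrite !inE => /andP[-> /(fsubsetP z1L) ->].
- apply/eqP/fsetP => x; rewrite z2 !inE.
  by case: (x == c); case: (x \in z.1); case: (x \in L).
Qed.

Lemma red_Z_zones L Z c : Z `<=` zones L -> red_Z Z c `<=` zones (red_L L c).
Proof.
move/fsubsetP=> ZL; apply/fsubsetP => w /imfsetP [z /= zZ ->].
exact/zred_zones/ZL.
Qed.

Lemma missing_red_lift L Z c (w : zone) : c \in L ->
  w \in missing (red_L L c) (red_Z Z c) ->
  ((c |` w.1, w.2) : zone) \in missing L Z /\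
  ((w.1, c |` w.2) : zone) \in missing L Z.
Proof.
case: w => w1 w2 cL; rewrite /missing /red_L !in_fsetD in_zones /=.
move=> /andP[wZ /andP[w1L /eqP w2E]].
have cw1 : c \notin w1 by apply: contraTN cL => /(fsubsetP w1L); rewrite !inE eqxx.
have cw2 : c \notin w2 by rewrite w2E !inE eqxx /= andbF.
have notinZ (z : zone) : zred z c = (w1, w2) -> z \notin Z.
  by move=> zw; apply: contra wZ => zZ; rewrite -zw; apply/imfsetP; exists z.
rewrite !in_zones /= !notinZ /zred /zin /zout /= ?fsetU1K ?mem_fsetD1 //.
have w1L' : w1 `<=` L := fsubset_trans w1L (fsubD1set _ _).
split; apply/andP; split=> //.
- by rewrite fsubUset fsub1set cL.
- by rewrite w2E fsetDDl.
- apply/eqP/fsetP => x; rewrite w2E !inE.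
  by case: (eqVneq x c) => [->|]; rewrite ?cL ?(negPf cw1).
Qed.

Lemma zred_fst_eq (y z : zone) l :
  (zred y l).1 = (zred z l).1 -> y.1 = z.1 \/ y.1 = (adj z l).1.
Proof.
move=> /fsetP yz; have {}yz x : x != l -> (x \in y.1) = (x \in z.1).
  by move=> xl; move: (yz x); rewrite !inE xl.
rewrite /adj /zin; case lz: (l \in z.1); case ly: (l \in y.1); [left|right|right|left];
  apply/fsetP => x; rewrite /= ?inE;
  by case: (eqVneq x l) => [->|xl]; rewrite ?lz ?ly ?eqxx ?(negPf xl) ?yz.
Qed.

Lemma missing_red_adj L Z (z : zone) l : Z `<=` zones L ->
  z \in missing L Z -> adj z l \in missing L Z ->
  zred z l \in missing (red_L L l) (red_Z Z l).
Proof.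
move=> ZL; rewrite /missing !in_fsetD => /andP[zZ zL] /andP[aZ aL].
rewrite zred_zones // andbT; apply/imfsetP => -[y /= yZ /(congr1 fst)/esym].
have yL := fsubsetP ZL y yZ.
by case/zred_fst_eq=> [/(zones_fst_inj yL zL)|/(zones_fst_inj yL aL)] yE;
  [move: zZ | move: aZ]; rewrite -yE yZ.
Qed.

Local Open Scope order_scope.

Section BigLattice.
Context {disp : Order.disp_t} {H : tbDistrLatticeType disp}.

Lemma le_meets_seq (T : eqType) (A B : list T) (F : T -> H) :
  {subset A <= B} -> \meet_(x <- B) F x <= \meet_(x <- A) F x.
Proof. by move=> AB; apply/meetsP_seq => x /AB xB _; exact: meets_inf_seq. Qed.

Lemma le_joins_seq (T : eqType) (A B : list T) (F : T -> H) :
  {subset A <= B} -> \join_(x <- A) F x <= \join_(x <- B) F x.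
Proof. by move=> AB; apply/joinsP_seq => x /AB xB _; exact: joins_sup_seq. Qed.

Lemma meets_fsetU (K : choiceType) (A B : {fset K}) (F : K -> H) :
  \meet_(x <- (A `|` B)%fset) F x = \meet_(x <- A) F x `&` \meet_(x <- B) F x.
Proof.
apply/le_anti/andP; split.
  by rewrite lexI !le_meets_seq // => x xA; rewrite in_fsetU xA ?orbT.
apply/meetsP_seq => x; rewrite in_fsetU => /orP[] xAB _;
  [apply: leIxl | apply: leIxr]; exact: meets_inf_seq.
Qed.

Lemma joins_fsetU (K : choiceType) (A B : {fset K}) (F : K -> H) :
  \join_(x <- (A `|` B)%fset) F x = \join_(x <- A) F x `|` \join_(x <- B) F x.
Proof.
apply/le_anti/andP; split; last first.
  by rewrite leUx !le_joins_seq // => x xA; rewrite in_fsetU xA ?orbT.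
apply/joinsP_seq => x; rewrite in_fsetU => /orP[] xAB _;
  [apply: lexUl | apply: lexUr]; exact: joins_sup_seq.
Qed.

Lemma meets_joinr T (s : list T) (F : T -> H) (d : H) :
  \meet_(x <- s) (F x `|` d) = \meet_(x <- s) F x `|` d.
Proof. by elim: s => [|a s IH]; rewrite ?big_nil ?join1x // !big_cons IH joinIl. Qed.

End BigLattice.

Section Heyting.
Context {disp : Order.disp_t} {H : tbDistrLatticeType disp}.
Variables (imp : H -> H -> H) (impP : heyting_imp imp).

Lemma meet_imp_le a b : a `&` imp a b <= b.
Proof. by rewrite meetC impP. Qed.

Lemma le_imp a a' b b' : a' <= a -> b <= b' -> imp a b <= imp a' b'.
Proof.
move=> a'a bb'; rewrite -impP (le_trans _ bb') // (le_trans _ (meet_imp_le a b)) //.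
by rewrite meetC leI2.
Qed.

Lemma imp_case_split a b x : imp (a `&` x) b `&` imp a (x `|` b) <= imp a b.
Proof.
rewrite -impP; set s := _ `&` a.
have sxb : s <= x `|` b.
  by rewrite (le_trans _ (meet_imp_le a _)) // lexI leIr leIxl ?leIr.
have sxb' : s `&` x <= b.
  apply: le_trans (meet_imp_le (a `&` x) b); rewrite lexI leI2 ?leIr //=.
  exact/leIxl/leIxl/leIxl.
by rewrite -(meet_idPl sxb) meetUr leUx sxb' leIr.
Qed.

End Heyting.

Section Semantics.
Context {disp : Order.disp_t} {H : tbDistrLatticeType disp}.
Variables (imp : H -> H -> H) (impP : heyting_imp imp) (v : var -> H).
Local Notation S := (sem imp v).

Lemma sem_venn1 L z : sem_venn imp v L [fset z] = zone_val imp v z.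
Proof. exact: big_seq_fset1. Qed.

Lemma sem_euler1 L Z z :
  missing L Z = [fset z] -> sem_euler imp v L Z = zone_imp imp v z.
Proof. by rewrite /sem_euler => ->; rewrite big_seq_fset1. Qed.

Lemma sem_PosL c : S (PosL c) = v c.
Proof.
by rewrite /= sem_venn1 /zone_val /= big_seq_fset1 big_seq_fset0 meetx1.
Qed.

Lemma sem_NegL c : S (NegL c) = hneg imp (v c).
Proof.
by rewrite /= sem_venn1 /zone_val /= big_seq_fset1 big_seq_fset0 meet1x.
Qed.

Lemma sem_VBot : S VBot = \bot.
Proof. exact: big_seq_fset0. Qed.

Lemma sem_VTop : S VTop = \top.
Proof. by rewrite /= sem_venn1 /zone_val /= !big_seq_fset0 meetxx. Qed.

Lemma meets_PosL s : \meet_(A <- [seq PosL n | n <- s]) S A = \meet_(n <- s) v n.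
Proof. by rewrite big_map; apply: eq_bigr => n _; exact: sem_PosL. Qed.

Lemma joins_PosL s : \join_(A <- [seq PosL n | n <- s]) S A = \join_(n <- s) v n.
Proof. by rewrite big_map; apply: eq_bigr => n _; exact: sem_PosL. Qed.

Lemma meets_NegL s :
  \meet_(A <- [seq NegL n | n <- s]) S A = \meet_(n <- s) hneg imp (v n).
Proof. by rewrite big_map; apply: eq_bigr => n _; exact: sem_NegL. Qed.

Lemma sem_vennU L Sh1 Sh2 :
  sem_venn imp v L (Sh1 `|` Sh2)%fset = sem_venn imp v L Sh1 `|` sem_venn imp v L Sh2.
Proof. exact: joins_fsetU. Qed.

Lemma sem_eulerI L Z1 Z2 :
  sem_euler imp v L (Z1 `&` Z2)%fset = sem_euler imp v L Z1 `&` sem_euler imp v L Z2.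
Proof. by rewrite /sem_euler /missing fsetDIr meets_fsetU. Qed.

Lemma sem_euler_le_red L Z c : c \in L ->
  sem_euler imp v L Z <= sem_euler imp v (red_L L c) (red_Z Z c).
Proof.
move=> cL; apply/meetsP_seq => w /(missing_red_lift cL) [wc_in wc_out] _.
have le_zone_imp z : z \in missing L Z -> sem_euler imp v L Z <= zone_imp imp v z.
  by move=> zM; exact: meets_inf_seq.
apply: le_trans (imp_case_split impP _ _ (v c)); rewrite lexI.
apply/andP; split; [move: (le_zone_imp _ wc_in) | move: (le_zone_imp _ wc_out)];
  move/le_trans; apply; apply: le_imp => //=.
- apply/meetsP_seq => x; rewrite in_fset1U => /orP[/eqP->|xw] _; first exact: leIr.
  by apply: leIxl; exact: meets_inf_seq.
- apply/joinsP_seq => x; rewrite in_fset1U => /orP[/eqP->|xw] _; first exact: leUl.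
  by apply: lexUr; exact: joins_sup_seq.
Qed.

Lemma sem_euler_reds_le L Z : red_cond L Z -> Z `<=` zones L ->
  \meet_(c <- red_contours L Z) sem_euler imp v (red_L L c) (red_Z Z c)
  <= sem_euler imp v L Z.
Proof.
move=> redLZ ZL; apply/meetsP_seq => z zM _.
have [l lL aM] := redLZ z zM.
have zlM := missing_red_adj ZL zM aM.
have lK : l \in red_contours L Z.
  by rewrite !inE lL /=; apply: contraTneq zlM => ->; rewrite in_fset0.
apply: (le_trans (meets_inf_seq _ lK _)) => //.
apply: (le_trans (meets_inf_seq _ zlM _)) => //.
by apply: le_imp => //; [apply: le_meets_seq | apply: le_joins_seq] => x;
  rewrite in_fsetD1 => /andP[].
Qed.

End Semantics.

Section Rules.
Context {disp : Order.disp_t} {H : tbDistrLatticeType disp}.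
Variables (imp : H -> H -> H) (impP : heyting_imp imp) (v : var -> H).
Local Notation S := (sem imp v).

Definition holds G D := \meet_(A <- G) S A <= \join_(B <- D) S B.

Definition holds_wf G D := all wf_euler G -> all wf_euler D -> holds G D.

Lemma holds_wf_perm G D G' D' :
  Permutation G G' -> Permutation D D' -> holds_wf G D -> holds_wf G' D'.
Proof.
move=> pG pD GD; rewrite /holds_wf -(all_Permutation _ pG) -(all_Permutation _ pD).
by rewrite /holds -(big_Permutation _ _ meetCA pG) -(big_Permutation _ _ joinCA pD).
Qed.

Lemma holds_wf_ax c G D : holds_wf (PosL c :: G) (PosL c :: D).
Proof. by move=> _ _; rewrite /holds !big_cons leIxl ?leUl. Qed.

Lemma holds_wf_botL G D : holds_wf (VBot :: G) D.
Proof. by move=> _ _; rewrite /holds big_cons sem_VBot meet0x le0x. Qed.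

Lemma holds_wf_topR G D : holds_wf G (VTop :: D).
Proof. by move=> _ _; rewrite /holds big_cons sem_VTop join1x lex1. Qed.

Lemma holds_wf_andL A B G D :
  holds_wf (A :: B :: G) D -> holds_wf (DAnd A B :: G) D.
Proof. by rewrite /holds_wf /holds !big_cons /= meetA -andbA. Qed.

Lemma holds_wf_orL A B G D :
  holds_wf (A :: G) D -> holds_wf (B :: G) D -> holds_wf (DOr A B :: G) D.
Proof.
rewrite /holds_wf /holds !big_cons /= => hA hB /andP[/andP[okA okB] okG] okD.
by rewrite meetUl leUx hA ?hB ?okA ?okB.
Qed.

Lemma holds_wf_impL A B G D :
  holds_wf (DImp A B :: G) [:: A] -> holds_wf (B :: G) D ->
  holds_wf (DImp A B :: G) D.
Proof.
rewrite /holds_wf /holds !big_cons big_nil joinx0 /=.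
move=> hA hB /andP[/andP[okA okB] okG] okD; apply: le_trans (hB _ okD); last first.
  by rewrite okB.
by rewrite lexI leIr (le_trans _ (meet_imp_le impP (S A) _)) // lexI hA ?okA ?okB ?leIl.
Qed.

Lemma holds_wf_andR A B G D :
  holds_wf G (A :: D) -> holds_wf G (B :: D) -> holds_wf G (DAnd A B :: D).
Proof.
rewrite /holds_wf /holds !big_cons /= => hA hB okG /andP[/andP[okA okB] okD].
by rewrite joinIl lexI hA ?hB ?okA ?okB.
Qed.

Lemma holds_wf_orR A B G D :
  holds_wf G (A :: B :: D) -> holds_wf G (DOr A B :: D).
Proof. by rewrite /holds_wf /holds !big_cons /= joinA -andbA. Qed.

Lemma holds_wf_impR A B G D :
  holds_wf (A :: G) [:: B] -> holds_wf G (DImp A B :: D).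
Proof.
rewrite /holds_wf /holds !big_cons big_nil joinx0 /=.
move=> h okG /andP[/andP[okA okB] okD].
by rewrite lexUl // -impP meetC h ?okA ?okB.
Qed.

Lemma holds_wf_litL c G D :
  holds_wf (NegL c :: G) [:: PosL c] -> holds_wf (NegL c :: G) D.
Proof.
rewrite /holds_wf /holds !big_cons big_nil joinx0 sem_NegL sem_PosL /hneg.
move=> h okG okD; rewrite (le_trans _ (le0x _)) //.
by rewrite (le_trans _ (meet_imp_le impP (v c) _)) // lexI h ?leIl.
Qed.

Lemma holds_wf_litR c G D :
  holds_wf (PosL c :: G) [::] -> holds_wf G (NegL c :: D).
Proof.
rewrite /holds_wf /holds !big_cons big_nil sem_NegL sem_PosL /hneg => h okG _.
by rewrite lexUl // -impP meetC h.
Qed.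

Lemma holds_wf_sepL L Sh Sh1 Sh2 G D : (Sh1 `|` Sh2)%fset = Sh ->
  holds_wf (DU (Venn L Sh1) :: G) D -> holds_wf (DU (Venn L Sh2) :: G) D ->
  holds_wf (DU (Venn L Sh) :: G) D.
Proof.
move=> <-; rewrite /holds_wf /holds !big_cons /= sem_vennU meetUl leUx.
by move=> h1 h2 okG okD; rewrite h1 ?h2.
Qed.

Lemma holds_wf_sepR L Sh Sh1 Sh2 G D : (Sh1 `|` Sh2)%fset = Sh ->
  holds_wf G (DU (Venn L Sh1) :: DU (Venn L Sh2) :: D) ->
  holds_wf G (DU (Venn L Sh) :: D).
Proof. by move=> <-; rewrite /holds_wf /holds !big_cons /= sem_vennU joinA. Qed.

Lemma all_wf_euler_PosL (s : seq.seq var) : all wf_euler [seq PosL n | n <- s].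
Proof. by rewrite all_map; apply/allP. Qed.

Lemma all_wf_euler_NegL (s : seq.seq var) : all wf_euler [seq NegL n | n <- s].
Proof. by rewrite all_map; apply/allP. Qed.

Lemma holds_wf_decL L z G D :
  holds_wf ([seq PosL n | n <- zin z] ++ [seq NegL o | o <- zout z] ++ G) D ->
  holds_wf (DU (Venn L [fset z]) :: G) D.
Proof.
rewrite /holds_wf /holds !all_cat all_wf_euler_PosL all_wf_euler_NegL.
by rewrite !big_cat meets_PosL meets_NegL big_cons /= sem_venn1 /zone_val meetA.
Qed.

Lemma holds_wf_decR L z G D :
  (forall n, n \in zin z -> holds_wf G (PosL n :: D)) ->
  (forall o, o \in zout z -> holds_wf G (NegL o :: D)) ->
  holds_wf G (DU (Venn L [fset z]) :: D).
Proof.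
move=> h_in h_out okG okD; rewrite /holds big_cons /= sem_venn1 /zone_val.
rewrite joinIl lexI -!meets_joinr; apply/andP; split; apply/meetsP_seq => x xz _.
- by move: (h_in x xz okG okD); rewrite /holds big_cons sem_PosL.
- by move: (h_out x xz okG okD); rewrite /holds big_cons sem_NegL.
Qed.

Lemma holds_wf_redL L Z G D :
  holds_wf ([seq EulerRed L Z c | c <- red_contours L Z] ++ G) D ->
  holds_wf (DU (Euler L Z) :: G) D.
Proof.
move=> h; rewrite /holds_wf /= => /andP[ZL okG] okD.
apply: le_trans (h _ okD); last first.
  by rewrite all_cat okG andbT all_map; apply/allP => c _; exact: red_Z_zones.
rewrite big_cat big_map big_cons leI2 //; apply/meetsP_seq => c cK _.
by apply: sem_euler_le_red; move: cK; rewrite !inE => /andP[].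
Qed.

Lemma holds_wf_redR L Z G D : red_cond L Z ->
  (forall c, c \in red_contours L Z -> holds_wf G (EulerRed L Z c :: D)) ->
  holds_wf G (DU (Euler L Z) :: D).
Proof.
move=> redLZ h okG; rewrite /= => /andP[ZL okD]; rewrite /holds big_cons.
apply: le_trans (leU2 (sem_euler_reds_le impP v redLZ ZL) (lexx _)).
rewrite -meets_joinr; apply/meetsP_seq => c cK _.
have okRD : all wf_euler (EulerRed L Z c :: D) by rewrite /= okD red_Z_zones.
by move: (h c cK okG okRD); rewrite /holds big_cons.
Qed.

Lemma holds_wf_mzsepL L Z Z1 Z2 G D :
  Z1 `<=` zones L -> Z2 `<=` zones L -> (Z1 `&` Z2)%fset = Z ->
  holds_wf (DU (Euler L Z1) :: DU (Euler L Z2) :: G) D ->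
  holds_wf (DU (Euler L Z) :: G) D.
Proof.
move=> Z1L Z2L <-; rewrite /holds_wf /holds !big_cons /= sem_eulerI meetA.
by move=> h /andP[_ okG] okD; rewrite h ?Z1L ?Z2L.
Qed.

Lemma holds_wf_mzsepR L Z Z1 Z2 G D :
  Z1 `<=` zones L -> Z2 `<=` zones L -> (Z1 `&` Z2)%fset = Z ->
  holds_wf G (DU (Euler L Z1) :: D) -> holds_wf G (DU (Euler L Z2) :: D) ->
  holds_wf G (DU (Euler L Z) :: D).
Proof.
move=> Z1L Z2L <-; rewrite /holds_wf /holds !big_cons /= sem_eulerI joinIl lexI.
by move=> h1 h2 okG /andP[_ okD]; rewrite h1 ?h2 ?Z1L ?Z2L.
Qed.

Lemma holds_wf_impdecL L Z z G D : missing L Z = [fset z] ->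
  (forall n, n \in zin z -> holds_wf (DU (Euler L Z) :: G) [:: PosL n]) ->
  (forall o, o \in zout z -> holds_wf (PosL o :: G) D) ->
  holds_wf (DU (Euler L Z) :: G) D.
Proof.
move=> Mz h_in h_out okEG okD; have okG : all wf_euler G by case/andP: okEG.
rewrite /holds big_cons /= (sem_euler1 _ _ Mz) /zone_imp.
set a := \meet_(n <- zin z) v n; set b := \join_(o <- zout z) v o.
set M := \meet_(A <- G) S A; set J := \join_(B <- D) S B.
have le_a : imp a b `&` M <= a.
  apply/meetsP_seq => n nz _; move: (h_in n nz okEG isT).
  by rewrite /holds !big_cons big_nil joinx0 sem_PosL /= (sem_euler1 _ _ Mz).
have le_b : imp a b `&` M <= b.
  by rewrite (le_trans _ (meet_imp_le impP a b)) // lexI le_a leIl.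
have b_J : b <= imp M J.
  apply/joinsP_seq => o oz _; rewrite -impP.
  by move: (h_out o oz okG okD); rewrite /holds big_cons sem_PosL.
by rewrite (le_trans _ (meet_imp_le impP M J)) // lexI leIr (le_trans le_b b_J).
Qed.

Lemma holds_wf_impdecR L Z z G D : missing L Z = [fset z] ->
  holds_wf ([seq PosL n | n <- zin z] ++ G) [seq PosL o | o <- zout z] ->
  holds_wf G (DU (Euler L Z) :: D).
Proof.
move=> Mz; rewrite /holds_wf /holds all_cat !all_wf_euler_PosL big_cat.
rewrite meets_PosL joins_PosL big_cons /= (sem_euler1 _ _ Mz) => h okG _.
by rewrite lexUl // -impP meetC h.
Qed.

Lemma holds_wf_detL L Z Sh G D :
  holds_wf (DU (EulerVenn L Z Sh) :: G) [:: DU (Euler L Z)] ->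
  holds_wf (DU (Venn L Sh) :: G) D ->
  holds_wf (DU (EulerVenn L Z Sh) :: G) D.
Proof.
move=> hE hV okEG okD; have /andP[ZL okG] := okEG.
have okE : all wf_euler [:: DU (Euler L Z)] by apply/andP.
move: (hE okEG okE) (hV okG okD); rewrite /holds !big_cons big_nil joinx0 /=.
move=> le_E; apply: le_trans; rewrite lexI leIr.
by rewrite (le_trans _ (meet_imp_le impP (sem_euler imp v L Z) _)) // lexI le_E leIl.
Qed.

Lemma holds_wf_detR L Z Sh G D :
  holds_wf (DU (Euler L Z) :: G) [:: DU (Venn L Sh)] ->
  holds_wf G (DU (EulerVenn L Z Sh) :: D).
Proof.
move=> h okG /andP[ZL _].
have okEG : all wf_euler (DU (Euler L Z) :: G) by apply/andP.
move: (h okEG isT); rewrite /holds !big_cons big_nil joinx0 /= => le_V.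
by rewrite lexUl // -impP meetC.
Qed.

Lemma prov_holds_wf G D : prov G D -> holds_wf G D.
Proof.
elim=> {G D}.
- by move=> G D G' D' pG pD _ h; exact: holds_wf_perm pG pD h.
- exact: holds_wf_ax.
- exact: holds_wf_botL.
- exact: holds_wf_topR.
- by move=> *; apply: holds_wf_andL.
- by move=> *; apply: holds_wf_orL.
- by move=> *; apply: holds_wf_impL.
- by move=> *; apply: holds_wf_andR.
- by move=> *; apply: holds_wf_orR.
- by move=> *; apply: holds_wf_impR.
- by move=> *; apply: holds_wf_litL.
- by move=> *; apply: holds_wf_litR.
- by move=> L Sh Sh1 Sh2 G D _ ShE _ h1 _ h2; apply: holds_wf_sepL ShE h1 h2.
- by move=> L Sh Sh1 Sh2 G D _ ShE _ h; apply: holds_wf_sepR ShE h.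
- by move=> *; apply: holds_wf_decL.
- by move=> L z G D _ h_in _ h_out; apply: holds_wf_decR h_in h_out.
- by move=> L Z G D _ _ h; exact: holds_wf_redL h.
- by move=> L Z G D redLZ _ h; apply: holds_wf_redR redLZ h.
- by move=> L Z Z1 Z2 G D _ Z1L Z2L ZE _ h; apply: holds_wf_mzsepL Z1L Z2L ZE h.
- by move=> L Z Z1 Z2 G D _ Z1L Z2L ZE _ h1 _ h2;
    apply: holds_wf_mzsepR Z1L Z2L ZE h1 h2.
- by move=> L Z z G D Mz _ h_in _ h_out; apply: holds_wf_impdecL Mz h_in h_out.
- by move=> L Z z G D Mz _ h; apply: holds_wf_impdecR Mz h.
- by move=> *; apply: holds_wf_detL.
- by move=> *; apply: holds_wf_detR.
Qed.

End Rules.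

Theorem theorem1 (G D : list diagram) :
  Forall (fun A => wf_diagram A) G -> Forall (fun B => wf_diagram B) D ->
  prov G D -> valid G D.
Proof.
move=> wfG wfD GD disp H imp impP v.
exact: (prov_holds_wf impP v GD (Forall_wf_euler wfG) (Forall_wf_euler wfD)).
Qed.
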